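(* Let $P(x)=\sum_{I\in\mathcal{I}}a_Ix^I$ be a polynomial in $x=(x_1,\dots,x_n)$, $n\ge2$, with $\mathcal{I}\subset\mathbb{N}^n$ finite containing all $I$ with $|I|\le1$, $a_I>0$ on $\mathcal{I}$, $a_I=1$ for $|I|\le1$, which solves $$\frac{\det\Big[\big(P\,\partial_{\alpha}\partial_{\beta}P-\partial_\alpha P\,\partial_\beta P\big)x_\alpha+P\,\partial_\alpha P\,\delta_{\alpha\beta}\Big]_{1\le\alpha,\beta\le n}}{P^{n-1}}=P^{n}.$$ Then for each $i$ there are $k_i\in\mathbb{Z}^+$ and, for each $j\neq i$, $h_{ij}\in\mathbb{N}$ such that, writing $te_i$ for the point with $i$-th coordinate $t$ and other coordinates $0$, $$P(te_i)=\Big(1+\frac{t}{k_i}\Big)^{k_i},\qquad \partial_jP(te_i)=\Big(1+\frac{t}{k_i}\Big)^{h_{ij}}\ (j\ne i),$$ and moreover $\sum_{\alpha\neq i}h_{i\alpha}=k_i(n-2)+2$ for every $i$, and $\frac{h_{ij}}{k_i}=\frac{h_{ji}}{k_j}$ for all $i\neq j$.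
   Context: $\partial_\alpha=\partial/\partial x_\alpha$, $x^I=\prod_\alpha x_\alpha^{I_\alpha}$, $|I|=\sum_\alpha I_\alpha$. *)

From HB Require Import structures.
From mathcomp Require Import all_boot all_order all_algebra.
From mathcomp Require Import mpoly.
From mathcomp Require Import reals.
Set Implicit Arguments. Unset Strict Implicit. Unset Printing Implicit Defensive.
Import Order.TTheory GRing.Theory Num.Theory.
Local Open Scope ring_scope.

Definition lemma7_mx (R : realType) (n : nat) (P : {mpoly R[n]}) : 'M[{mpoly R[n]}]_n :=
  \matrix_(a < n, b < n)
    ((P * (mderiv b (mderiv a P)) - mderiv a P * mderiv b P) * 'X_a
     + (if a == b then P * mderiv a P else 0)).

Definition axis_pt (R : realType) (n : nat) (i : 'I_n) (t : R) : 'I_n -> R :=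
  fun j => if j == i then t else 0.

(* Restricting the equation to the axis [t e_i] kills the off-diagonal entries of every row
   [a <> i] of the matrix, so with [f := P(t e_i)] and [G := prod_(a <> i) d_a P(t e_i)] it
   becomes the univariate equation [G * Dop f = f^n], where [Dop f = f^2 (X f'/f)'].
   An irreducible factor [p] of [f] of multiplicity [m+1] divides [Dop f] exactly [2m]
   times. Writing [f = r g] and [f' = M g] with [g = gcd(f, f')], this makes
   [Dop f / g^2 = (X M)' r - X M r'] coprime to [f]; as it divides [f^n] it is constant, so
   its derivative [(X M)'' r - X M r''] vanishes and [r] divides [r'']. Hence [r] is linear,
   [f] is a power of [r], and [f(0) = f'(0) = 1] forces [f = (1 + t/k)^k]. Then
   [G = (1 + t/k)^(k(n-2)+2)], so each [d_j P(t e_i)] divides it and is a power of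
   [1 + t/k] as well, and [h_ij / k_i = d_i d_j P(0)] is symmetric in [i, j]. *)

From HB Require Import structures.
From mathcomp Require Import all_boot all_order all_algebra.
From mathcomp Require Import mpoly.
From mathcomp Require Import reals.
From mathcomp Require Import fingroup perm ring zify polyorder.
From Stdlib Require Import Classical.
Import Order.TTheory GRing.Theory Num.Theory.
Local Open Scope ring_scope.

Set Implicit Arguments. Unset Strict Implicit. Unset Printing Implicit Defensive.

Section IrreducibleFactors.
Variable F : fieldType.
Implicit Types p q a b f : {poly F}.

Lemma irredp_dvdpM p a b :
  irreducible_poly p -> (p %| a * b) = (p %| a) || (p %| b).
Proof.
move=> ip; case pa: (p %| a) => /=; first exact: dvdp_mulr.
by rewrite Gauss_dvdpr // irreducible_poly_coprime // pa.
Qed.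

Lemma irredp_dvdpX p a k : irreducible_poly p -> p %| a ^+ k -> p %| a.
Proof.
move=> ip; elim: k => [|k IH]; first by rewrite dvdp1 => /eqP p1; case: ip; rewrite p1.
by rewrite exprS irredp_dvdpM // => /orP[] // /IH.
Qed.

Lemma irredp_ndvdpC p c : irreducible_poly p -> c != 0 -> ~~ (p %| c%:P).
Proof.
by case=> sp _ c0; rewrite gtNdvdp ?polyC_eq0 // size_polyC c0.
Qed.

Lemma irredp_factor p : (1 < size p)%N -> exists2 q, irreducible_poly q & q %| p.
Proof.
elim: {p}(size p) {-2}p (leqnn (size p)) => [|s IH] p sp p1.
  by move: (leq_trans p1 sp).
case: (classic (irreducible_poly p)) => [ip|nip]; first by exists p.
have [q sq1 [qp nqp]] : exists2 q : {poly F}, size q != 1%N & q %| p /\ ~~ (q %= p).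
  apply: NNPP => nq; apply: nip; split => // q sq qp.
  by apply: NNPP => nqp; apply: nq; exists q => //; split => //; apply/negP.
have p0 : p != 0 by rewrite -size_poly_gt0 ltnW.
have q0 : q != 0 by apply: contraNneq p0 => q0; move: qp; rewrite q0 dvd0p.
have sqp : (size q < size p)%N by rewrite ltn_neqAle dvdp_leq // (dvdp_size_eqp qp) andbT.
have q1 : (1 < size q)%N by rewrite ltn_neqAle eq_sym sq1 size_poly_gt0.
have [r ir rq] := IH q (leq_trans sqp sp) q1.
by exists r => //; exact: dvdp_trans qp.
Qed.

Lemma irredp_dvd_polyX p : irreducible_poly p -> (p %| 'X) = root p 0.
Proof.
by move=> ip; rewrite -[LHS]negbK -irreducible_poly_coprime // coprimepX negbK.
Qed.

Lemma exp_dvdp_decomp p f : (1 < size p)%N -> f != 0 ->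
  exists m q, f = p ^+ m * q /\ ~~ (p %| q).
Proof.
move=> sp f0; have p0 : p != 0 by rewrite -size_poly_gt0 ltnW.
pose P m := p ^+ m %| f.
have P0 : exists m, P m by exists 0%N; rewrite /P expr0 dvd1p.
have Pub m : P m -> (m <= size f)%N.
  move=> /(dvdp_leq f0); apply: leq_trans.
  by rewrite (leq_trans _ (leq_pred _)) // size_exp leq_pmull // -subn1 subn_gt0.
case: (ex_maxnP P0 Pub) => m Pm maxm; exists m, (f %/ p ^+ m).
split; first by rewrite mulrC divpK.
apply/negP => pq; suff /maxm : P m.+1 by rewrite ltnn.
by rewrite /P -(divpK Pm) exprSr mulrC dvdp_mul2r ?expf_neq0.
Qed.
End IrreducibleFactors.

Lemma poly_horner_eq0 (R : numDomainType) (p : {poly R}) :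
  (forall x, p.[x] = 0) -> p = 0.
Proof.
move=> p0; apply: (roots_geq_poly_eq0 (rs := [seq j%:R | j <- iota 0 (size p)])).
- by apply/allP => x _; apply/rootP.
- by rewrite map_inj_uniq ?iota_uniq // => x y /eqP; rewrite eqr_nat => /eqP.
- by rewrite size_map size_iota.
Qed.

Lemma det_diag_but_row (S : comRingType) m (A : 'M[S]_m) (i : 'I_m) :
  (forall a b, a != i -> a != b -> A a b = 0) -> \det A = \prod_a A a a.
Proof.
move=> hA; rewrite /determinant (bigD1 (1%g : 'S_m)) //= odd_perm1 expr0 mul1r.
rewrite [X in _ + X]big1 ?addr0.
  by apply: eq_bigr => a _; rewrite perm1.
move=> s s1; have [a sa] : exists a, s a != a.
  apply/existsP; apply: contraNT s1 => /existsPn h; apply/eqP/permP => x.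
  by rewrite perm1; apply/eqP/negPn/h.
have [b [bi sb]] : exists b, b != i /\ s b != b.
  have [ai|ai] := eqVneq a i; last by exists a.
  exists (s a); rewrite -ai; split => //.
  by apply: contra sa => /eqP /perm_inj sa; rewrite sa.
by rewrite (bigD1 b) //= hA ?mul0r ?mulr0 // eq_sym.
Qed.

Lemma meval_zero (R : comRingType) n (Q : {mpoly R[n]}) : Q.@[fun _ => 0] = Q@_0.
Proof.
elim/mpolyind: Q => [|c m p _ _ IH]; first by rewrite meval0 mcoeff0.
rewrite mevalD mevalZ mevalX IH mcoeffD mcoeffZ mcoeffX; congr (c * _ + _).
case: eqP => [->|/eqP m0]; first by rewrite big1 // => j _; rewrite mnm0E expr0.
have [j mj] : exists j, m j != 0%N.
  apply/existsP; apply: contraNT m0 => /existsPn mj; apply/eqP/mnmP => j.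
  by rewrite mnm0E; apply/eqP/negPn/mj.
by rewrite (bigD1 j) //= expr0n (negPf mj) mul0r.
Qed.

Section EulerOperator.
Variable R : realFieldType.
Implicit Types p q f g r M G : {poly R}.

(* The diagonal entry [(P d_i^2 P - (d_i P)^2) x_i + P d_i P] of [lemma7_mx P] on the
   [i]-th axis, as an operator on [f := P(t e_i)]; it equals [f^2 (X f'/f)']. *)
Definition Dop f := 'X * (f * f^`()^`() - f^`() ^+ 2) + f * f^`().

Lemma DopM a b : Dop (a * b) = b ^+ 2 * Dop a + a ^+ 2 * Dop b.
Proof. rewrite /Dop !derivM !derivD !derivM; ring. Qed.

Lemma Dop_exp a m : Dop (a ^+ m.+1) = m.+1%:R * a ^+ (2 * m) * Dop a.
Proof.
elim: m => [|m IH]; first by rewrite expr1 muln0 expr0 mulr1 mul1r.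
rewrite exprS DopM IH -exprM -[m.+2]addn1 natrD.
have -> : (m.+1 * 2 = 2 * m + 2)%N by lia.
by rewrite mulnSr !exprD; ring.
Qed.

Lemma irredp_ndvdp_deriv p : irreducible_poly p -> ~~ (p %| p^`()).
Proof.
case=> sp _; rewrite gtNdvdp // ?size_deriv; last by rewrite prednK // ltnW.
by rewrite -size_poly_gt0 size_deriv -subn1 subn_gt0.
Qed.

Lemma deriv_mult p q m :
  (p ^+ m.+1 * q)^`() = p ^+ m * (m.+1%:R * p^`() * q + p * q^`()).
Proof. by rewrite derivM deriv_exp /= -mulr_natr exprS; ring. Qed.

Lemma irredp_ndvdp_deriv_cofactor p q m : irreducible_poly p -> ~~ (p %| q) ->
  ~~ (p %| m.+1%:R * p^`() * q + p * q^`()).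
Proof.
move=> ip pq; rewrite dvdp_addl ?dvdp_mulIl // !irredp_dvdpM //.
rewrite -polyC_natr (negPf (irredp_ndvdpC ip _)) ?pnatr_eq0 //.
by rewrite (negPf (irredp_ndvdp_deriv ip)) (negPf pq).
Qed.

Lemma Dop_mult p q m :
  Dop (p ^+ m.+1 * q) = p ^+ (2 * m) * (m.+1%:R * q ^+ 2 * Dop p + p ^+ 2 * Dop q).
Proof.
rewrite DopM Dop_exp -exprM.
have -> : (m.+1 * 2 = 2 * m + 2)%N by lia.
by rewrite exprD; ring.
Qed.

Lemma irredp_ndvdp_Dop_cofactor p q m :
  irreducible_poly p -> ~~ root p 0 -> ~~ (p %| q) ->
  ~~ (p %| m.+1%:R * q ^+ 2 * Dop p + p ^+ 2 * Dop q).
Proof.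
move=> ip p0 pq; rewrite dvdp_addl; last by rewrite expr2 -mulrA dvdp_mulIl.
(* modulo [p], the term [m.+1 q^2 Dop p] reduces to [- m.+1 q^2 X p'^2] *)
have -> : m.+1%:R * q ^+ 2 * Dop p =
    p * (m.+1%:R * q ^+ 2 * ('X * p^`()^`() + p^`()))
    - m.+1%:R * q * q * 'X * p^`() * p^`().
  by rewrite /Dop; ring.
rewrite dvdp_addr ?dvdp_mulIl // dvdpNr !irredp_dvdpM // irredp_dvd_polyX // (negPf p0).
rewrite -polyC_natr (negPf (irredp_ndvdpC ip _)) ?pnatr_eq0 //.
by rewrite (negPf (irredp_ndvdp_deriv ip)) (negPf pq).
Qed.

(* In characteristic 0, [radp f] is the squarefree part of [f]. *)
Definition radp f := f %/ gcdp f f^`().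

Definition Dop_core f :=
  ('X * (f^`() %/ gcdp f f^`()))^`() * radp f
  - 'X * (f^`() %/ gcdp f f^`()) * (radp f)^`().

Lemma Dop_gcdpE f : Dop f = gcdp f f^`() ^+ 2 * Dop_core f.
Proof.
rewrite /Dop_core; set g := gcdp _ _; set r := radp f; set M := _ %/ g.
have hf : f = r * g by rewrite divpK ?dvdp_gcdl.
have hf' : f^`() = M * g by rewrite divpK ?dvdp_gcdr.
have hr : r^`() * g + r * g^`() = M * g by rewrite -derivM -hf.
apply/eqP; rewrite -subr_eq0.
have -> : Dop f - g ^+ 2 * (('X * M)^`() * r - 'X * M * r^`())
    = 'X * M * g * (r^`() * g + r * g^`() - M * g).
  by rewrite /Dop hf' hf !derivM derivX; ring.
by rewrite hr subrr mulr0.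
Qed.

Lemma irredp_dvd_radp_Dop_core f p : ~~ root f 0 -> irreducible_poly p -> p %| f ->
  p %| radp f /\ ~~ (p %| Dop_core f).
Proof.
move=> f0 ip pf; have p0 := irredp_neq0 ip.
have fn0 : f != 0 by apply: contraNneq f0 => ->; rewrite root0.
have [[|m] [q [hfq pq]]] := exp_dvdp_decomp ip.1 fn0.
  by move: pq; rewrite -(mul1r q) -(expr0 p) -hfq pf.
have pr0 : ~~ root p 0 by apply: contra f0; apply: root_dvdp.
have pm0 : p ^+ m != 0 by rewrite expf_neq0.
have hfd := deriv_mult p q m; rewrite -hfq in hfd.
(* [p] divides [f'] exactly [m] times, hence so does [gcdp f f'] *)
have [g' hg pg'] : exists2 g', gcdp f f^`() = p ^+ m * g' & ~~ (p %| g').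
  have pmg : p ^+ m %| gcdp f f^`().
    by rewrite dvdp_gcd hfd dvdp_mulIl hfq exprSr -mulrA dvdp_mulIl.
  exists (gcdp f f^`() %/ p ^+ m); first by rewrite mulrC divpK.
  apply/negP => pg'; have : p ^+ m * p %| f^`().
    apply: dvdp_trans (dvdp_gcdr f f^`()).
    by rewrite -(divpK pmg) [_ %/ _ * _]mulrC dvdp_mul2l.
  by rewrite hfd dvdp_mul2l // (negPf (irredp_ndvdp_deriv_cofactor m ip pq)).
split.
- have e : radp f * g' = p * q.
    by apply: (mulfI pm0); rewrite mulrCA -hg /radp divpK ?dvdp_gcdl // hfq exprSr mulrA.
  have : p %| radp f * g' by rewrite e dvdp_mulIl.
  by rewrite irredp_dvdpM // (negPf pg') orbF.
- apply/negP => pN; have := irredp_ndvdp_Dop_cofactor m ip pr0 pq.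
  have -> : m.+1%:R * q ^+ 2 * Dop p + p ^+ 2 * Dop q = g' ^+ 2 * Dop_core f.
    apply: (mulfI (expf_neq0 (2 * m) p0)); rewrite -Dop_mult -hfq Dop_gcdpE hg.
    by rewrite mulnC exprM; ring.
  by rewrite dvdp_mull.
Qed.

Lemma size_Dop_core_le1 f G N : ~~ root f 0 -> G * Dop f = f ^+ N ->
  (size (Dop_core f) <= 1)%N.
Proof.
move=> f0 hG; rewrite leqNgt; apply/negP => /irredp_factor [p ip pN].
have pf : p %| f.
  by apply: (irredp_dvdpX (k := N)) => //; rewrite -hG Dop_gcdpE !dvdp_mull.
by have [_] := irredp_dvd_radp_Dop_core f0 ip pf; rewrite pN.
Qed.

Lemma deriv_wronskian (a b : {poly R}) :
  (a^`() * b - a * b^`())^`() = a^`()^`() * b - a * b^`()^`().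
Proof. by rewrite derivB !derivM; ring. Qed.

Lemma size_radp_le2 f G N : ~~ root f 0 -> G * Dop f = f ^+ N ->
  (size (radp f) <= 2)%N.
Proof.
move=> f0 hG; have fn0 : f != 0 by apply: contraNneq f0 => ->; rewrite root0.
have := size_Dop_core_le1 f0 hG; move/size1_polyC/(congr1 deriv); rewrite derivC.
rewrite /Dop_core; set g := gcdp _ _; set r := radp f; set XM := 'X * _.
rewrite deriv_wronskian.
move/eqP; rewrite subr_eq0 => /eqP hXM.
have cop : coprimep r XM.
  rewrite coprimepMr coprimepX coprimep_div_gcd ?fn0 // andbT.
  by apply: contra f0; apply: root_dvdp; rewrite divp_dvd ?dvdp_gcdl.
have : r %| r^`()^`() by rewrite -(Gauss_dvdpl _ cop) mulrC -hXM dvdp_mulIr.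
have [r2|r2] := eqVneq r^`()^`() 0.
  by move: r2 => /eqP; rewrite -size_poly_eq0 !size_deriv; case: (size r) => [|[|[]]].
have r1 : r^`() != 0 by apply: contraNneq r2 => ->; rewrite deriv0.
have r0 : r != 0 by apply: contraNneq r1 => ->; rewrite deriv0.
by rewrite gtNdvdp // (ltn_trans (lt_size_deriv r1) (lt_size_deriv r0)).
Qed.

Definition ell (k : nat) : {poly R} := k%:R^-1 *: ('X + k%:R%:P).

Lemma ell_horner k t : (0 < k)%N -> (ell k).[t] = 1 + t / k%:R.
Proof.
move=> k0; have kn : k%:R != 0 :> R by rewrite pnatr_eq0 -lt0n.
by rewrite /ell hornerZ hornerD hornerX hornerC; field.
Qed.

Lemma ell_neq0 k : (0 < k)%N -> ell k != 0.
Proof.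
move=> k0; rewrite -size_poly_gt0 size_scale ?size_XaddC //.
by rewrite invr_eq0 pnatr_eq0 -lt0n.
Qed.

Lemma size_ell_exp k h : (0 < k)%N -> size (ell k ^+ h) = h.+1.
Proof.
move=> k0; rewrite -[LHS]prednK ?size_poly_gt0 ?expf_neq0 ?ell_neq0 // size_exp.
by rewrite size_scale ?size_XaddC ?mul1n // invr_eq0 pnatr_eq0 -lt0n.
Qed.

Lemma Dop_ell k : (0 < k)%N -> Dop (ell k) = k%:R^-1%:P.
Proof.
move=> k0; have kn : k%:R != 0 :> R by rewrite pnatr_eq0 -lt0n.
rewrite /Dop /ell derivZ derivD derivX derivC addr0 derivZ derivC scaler0.
rewrite -!mul_polyC; set u := _%:P.
have uk : u * k%:R%:P = 1 by rewrite -polyCM mulVf.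
by transitivity (u * (u * k%:R%:P)); [ring | rewrite uk mulr1].
Qed.

Lemma deriv_ell_exp0 k h : (0 < k)%N -> ((ell k ^+ h)^`()).[0] = h%:R / k%:R.
Proof.
move=> k0; rewrite deriv_exp hornerMn hornerM horner_exp ell_horner // mul0r addr0.
rewrite expr1n mulr1 /ell derivZ derivD derivX derivC addr0 hornerZ hornerC.
by rewrite mulr1 -mulr_natr mulrC.
Qed.

Lemma linear_exp_normalized f r c k : size r = 2%N -> f = c%:P * r ^+ k ->
  f.[0] = 1 -> f^`().[0] = 1 -> (0 < k)%N /\ f = ell k ^+ k.
Proof.
move=> sr -> f0 f'0.
have hr : r = r`_1 *: 'X + (r`_0)%:P.
  apply/polyP => i; rewrite coefD coefZ coefX coefC.
  case: i => [|[|i]] /=; rewrite ?mulr0 ?add0r ?addr0 ?mulr1 //.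
  by rewrite nth_default // sr.
move: hr f0 f'0; set a := r`_1; set b := r`_0 => hr.
case: k => [|k].
  by rewrite expr0 mulr1 derivC horner0 => _ /eqP; rewrite eq_sym oner_eq0.
have kn : k.+1%:R != 0 :> R by rewrite pnatr_eq0.
rewrite derivM derivC mul0r add0r deriv_exp hr derivD derivZ derivX derivC addr0 alg_polyC.
rewrite !(hornerMn, hornerM, hornerC, horner_exp, hornerD, hornerZ, hornerX).
rewrite mulr0 add0r => e0 e1.
have hb : b = k.+1%:R * a.
  transitivity (b * (c * (a * b ^+ k *+ k.+1))); first by rewrite e1 mulr1.
  transitivity (k.+1%:R * a * (c * b ^+ k.+1)); last by rewrite e0 mulr1.
  by rewrite exprS -mulr_natr; ring.
have -> : a *: 'X + b%:P = b%:P * ell k.+1.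
  by rewrite /ell hb mul_polyC scalerA mulrAC mulfV // mul1r scalerDr scale_polyC mulrC.
by rewrite exprMn -polyC_exp mulrA -polyCM e0 mul1r.
Qed.

Lemma Dop_eq_exp_ell f G N : f.[0] = 1 -> f^`().[0] = 1 ->
  G * Dop f = f ^+ N -> (0 < (size f).-1)%N /\ f = ell (size f).-1 ^+ (size f).-1.
Proof.
move=> f0 f'0 hG; have rf0 : ~~ root f 0 by rewrite /root f0 oner_eq0.
have fn0 : f != 0 by apply: contraNneq rf0 => ->; rewrite root0.
have fsz : (1 < size f)%N.
  rewrite ltnNge; apply/negP => /size1_polyC hf.
  by move: f'0; rewrite hf derivC horner0 => /eqP; rewrite eq_sym oner_eq0.
have rn0 : radp f != 0.
  by apply: contraNneq fn0 => r0; rewrite -(divpK (dvdp_gcdl f f^`())) -/(radp f) r0 mul0r.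
have [p ip pf] := irredp_factor fsz.
have sr : size (radp f) = 2%N.
  apply/eqP; rewrite eqn_leq (size_radp_le2 rf0 hG) (leq_trans ip.1) //.
  by rewrite dvdp_leq // (irredp_dvd_radp_Dop_core rf0 ip pf).1.
have [k [q [hfq rq]]] : exists k q, f = radp f ^+ k * q /\ ~~ (radp f %| q).
  by apply: exp_dvdp_decomp; rewrite ?sr.
have qf : q %| f by rewrite hfq dvdp_mull.
have qc : (size q <= 1)%N.
  rewrite leqNgt; apply/negP => /irredp_factor [p' ip' p'q].
  have [p'r _] := irredp_dvd_radp_Dop_core rf0 ip' (dvdp_trans p'q qf).
  have e : p' %= radp f by rewrite -dvdp_size_eqp // eqn_leq dvdp_leq //= sr ip'.1.
  by rewrite -(eqp_dvdl _ e) p'q in rq.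
rewrite mulrC (size1_polyC qc) in hfq.
have [k0 hf] := linear_exp_normalized sr hfq f0 f'0.
by have -> : (size f).-1 = k by rewrite hf size_ell_exp.
Qed.

Lemma Dop_cofactor_ell_exp k G N : (0 < k)%N -> (2 <= N)%N ->
  G * Dop (ell k ^+ k) = ell k ^+ k ^+ N -> G = ell k ^+ (k * (N - 2) + 2).
Proof.
case: k => // k _ N2; have kn : k.+1%:R != 0 :> R by rewrite pnatr_eq0.
rewrite Dop_exp Dop_ell // -polyC_natr mulrAC -polyCM mulfV // mul1r -exprM => hG.
apply: (mulIf (expf_neq0 (2 * k) (ell_neq0 (ltn0Sn k)))).
by rewrite hG -exprD; congr (_ ^+ _); nia.
Qed.

Lemma dvdp_ell_exp k K g : (0 < k)%N -> g %| ell k ^+ K -> g.[0] = 1 ->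
  g = ell k ^+ (size g).-1.
Proof.
move=> k0 gd g0; have kn : k%:R != 0 :> R by rewrite pnatr_eq0 -lt0n.
have eX : ell k %= 'X - (- k%:R)%:P by rewrite /ell polyCN opprK eqp_scale // invr_eq0.
move: gd; rewrite (eqp_dvdr _ (eqp_exp K eX)) => /dvdp_exp_XsubCP [h _ gh].
have {gh} gh : g %= ell k ^+ h by rewrite (eqp_trans gh) // eqp_sym eqp_exp.
have gn0 : g != 0 by apply: contra_eq_neq g0 => ->; rewrite horner0 eq_sym oner_neq0.
have := congr1 (horner^~ 0) (eqp_eq gh).
rewrite !hornerZ g0 horner_exp ell_horner // mul0r addr0 expr1n !mulr1 => el.
have eg : g = ell k ^+ h.
  by apply: (scalerI (a := lead_coef g)); rewrite ?lead_coef_eq0 // -{1}el eqp_eq.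
by rewrite {2}eg size_ell_exp.
Qed.

Lemma prod_ell_exp (I : eqType) (r : seq I) (P : pred I) (gs : I -> {poly R}) k K :
  (0 < k)%N -> (forall a, (gs a).[0] = 1) -> \prod_(a <- r | P a) gs a = ell k ^+ K ->
  (forall a, a \in r -> P a -> gs a = ell k ^+ (size (gs a)).-1) /\
  (\sum_(a <- r | P a) (size (gs a)).-1)%N = K.
Proof.
move=> k0 g0 hp.
have ha a : a \in r -> P a -> gs a = ell k ^+ (size (gs a)).-1.
  move=> ar Pa; apply: (dvdp_ell_exp (K := K)) => //.
  by rewrite -hp (big_rem a) //= Pa dvdp_mulIl.
split => //.
have : ell k ^+ (\sum_(a <- r | P a) (size (gs a)).-1) = ell k ^+ K.
  rewrite -hp -prodrXr big_seq_cond [RHS]big_seq_cond.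
  by apply: eq_bigr => a /andP[ar Pa]; rewrite -ha.
by move/(congr1 (fun p : {poly R} => size p)); rewrite !size_ell_exp // => -[].
Qed.
End EulerOperator.

Arguments ell {R}.

Definition axis_var (R : comRingType) n (i j : 'I_n) : {poly R} :=
  if j == i then 'X else 0.
Arguments axis_var {R n}.

Notation axis_poly i := (mmap (@polyC _) (axis_var i)).

Section AxisRestriction.
Variables (R : comRingType) (n : nat).
Implicit Types (Q : {mpoly R[n]}) (i : 'I_n).

Lemma axis_polyX i a : axis_poly i ('X_a : {mpoly R[n]}) = axis_var i a.
Proof. by rewrite mmapX mmap1U. Qed.

Lemma axis_mmap1_deriv i m :
  (mmap1 (axis_var i) m)^`() = (m i)%:R%:P * mmap1 (axis_var i) (m - U_(i))%MM :> {poly R}.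
Proof.
rewrite /mmap1 (bigD1 i) //= [in RHS](bigD1 i) //= /axis_var eqxx.
have -> : \prod_(j | j != i) (if j == i then 'X else 0) ^+ (m - U_(i))%MM j
        = \prod_(j | j != i) (if j == i then 'X else 0) ^+ m j :> {poly R}.
  by apply: eq_bigr => j ji; rewrite mnmBE mnm1E [i == j]eq_sym (negPf ji) subn0.
have -> : \prod_(j | j != i) (if j == i then 'X else 0) ^+ m j
        = (\prod_(j | j != i) (0 : R) ^+ m j)%:P :> {poly R}.
  by rewrite rmorph_prod; apply: eq_bigr => j ji; rewrite (negPf ji) rmorphXn rmorph0.
rewrite derivM derivC mulr0 addr0 derivXn mnmBE mnm1E eqxx subn1.
by rewrite -mulr_natl polyC_natr mulrA.
Qed.

Lemma axis_poly_deriv i Q : axis_poly i (mderiv i Q) = (axis_poly i Q)^`().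
Proof.
elim/mpolyind: Q => [|c m p _ _ IH]; first by rewrite mderiv0 mmap0 deriv0.
rewrite mderivD !mmapD IH derivD; congr (_ + _).
rewrite mderivZ mderivX scalerA !mmapZ !mmapX.
by rewrite rmorphM derivM /= derivC mul0r add0r axis_mmap1_deriv mulrA polyC_natr.
Qed.

End AxisRestriction.

Lemma axis_poly_horner (R : realType) n i (Q : {mpoly R[n]}) t :
  (axis_poly i Q).[t] = Q.@[axis_pt i t].
Proof.
rewrite /mmap mevalE horner_sum; apply: eq_bigr => m _.
rewrite hornerM hornerC /mmap1 horner_prod; congr (_ * _); apply: eq_bigr => j _.
by rewrite horner_exp /axis_var /axis_pt; case: eqP => _; rewrite ?hornerX ?horner0.
Qed.

Lemma axis_poly_horner0 (R : realType) n i (Q : {mpoly R[n]}) : (axis_poly i Q).[0] = Q@_0.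
Proof. by rewrite axis_poly_horner -meval_zero; apply: meval_eq => j; rewrite /axis_pt if_same. Qed.

Section AxisEquation.
Variables (R : realType) (n : nat) (P : {mpoly R[n]}) (i : 'I_n).

Lemma det_axis_mx : axis_poly i (\det (lemma7_mx P)) =
  Dop (axis_poly i P) * \prod_(a | a != i) (axis_poly i P * axis_poly i (mderiv a P)).
Proof.
rewrite -det_map_mx (@det_diag_but_row _ _ _ i) => [|a b ai ab]; last first.
  rewrite !mxE rmorphD rmorphM /= axis_polyX /axis_var (negPf ai) mulr0 add0r.
  by rewrite (negPf ab) mmap0.
rewrite (bigD1 i) //=; congr (_ * _).
  rewrite !mxE eqxx rmorphD !rmorphM rmorphB !rmorphM /=.
  by rewrite !axis_poly_deriv axis_polyX /axis_var eqxx /Dop; ring.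
apply: eq_bigr => a ai.
by rewrite !mxE eqxx rmorphD !rmorphM /= axis_polyX /axis_var (negPf ai) mulr0 add0r.
Qed.

Lemma axis_Dop_eq :
  (forall x, P.@[x] != 0 -> (\det (lemma7_mx P)).@[x] / P.@[x] ^+ n.-1 = P.@[x] ^+ n) ->
  axis_poly i P != 0 ->
  (\prod_(a | a != i) axis_poly i (mderiv a P)) * Dop (axis_poly i P) = axis_poly i P ^+ n.
Proof.
move=> hdet f0; set f := axis_poly i P.
have hD : axis_poly i (\det (lemma7_mx P)) = f ^+ n * f ^+ n.-1.
  have : (axis_poly i (\det (lemma7_mx P)) - f ^+ n * f ^+ n.-1) * f = 0.
    apply: poly_horner_eq0 => t; rewrite hornerM hornerD hornerN hornerM !horner_exp.
    have [->|ft] := eqVneq f.[t] 0; first by rewrite mulr0.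
    have := hdet (axis_pt i t); rewrite -!axis_poly_horner -/f => /(_ ft) <-.
    by rewrite divfK ?expf_neq0 // subrr mul0r.
  by move/eqP; rewrite mulf_eq0 (negPf f0) orbF subr_eq0 => /eqP.
move: hD; rewrite det_axis_mx big_split /= prodr_const cardC1 card_ord => e.
by apply: (mulfI (expf_neq0 n.-1 f0)); rewrite [RHS]mulrC -e; ring.
Qed.

End AxisEquation.

Unset Implicit Arguments. Set Strict Implicit.

Theorem lemma7 (R : realType) (n : nat) (P : {mpoly R[n]}) :
  (2 <= n)%N ->
  (forall m : 'X_{1..n}, m \in msupp P -> 0 < P@_m) ->
  (forall m : 'X_{1..n}, (mdeg m <= 1)%N -> P@_m = 1) ->
  (forall x : 'I_n -> R, P.@[x] != 0 ->
     (\det (lemma7_mx P)).@[x] / P.@[x] ^+ n.-1 = P.@[x] ^+ n) ->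
  exists (k : 'I_n -> nat) (h : 'I_n -> 'I_n -> nat),
    [/\ forall i, (0 < k i)%N,
        forall i (t : R), P.@[axis_pt i t] = (1 + t / (k i)%:R) ^+ k i,
        forall i j (t : R), j != i ->
          (mderiv j P).@[axis_pt i t] = (1 + t / (k i)%:R) ^+ h i j,
        forall i, (\sum_(a < n | a != i) h i a)%N = (k i * (n - 2) + 2)%N
      & forall i j, i != j ->
          (h i j)%:R / (k i)%:R = (h j i)%:R / (k j)%:R :> R].
Proof.
move=> n2 _ hc hdet.
have dP0 a : (mderiv a P)@_0 = 1.
  by rewrite mcoeff_deriv mnm0E add0m mulr1n hc // mdeg1.
pose k i := (size (axis_poly i P)).-1.
pose h i a := (size (axis_poly i (mderiv a P))).-1.
have key i : [/\ (0 < k i)%N, axis_poly i P = ell (k i) ^+ k i,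
    forall a, a != i -> axis_poly i (mderiv a P) = ell (k i) ^+ h i a
  & (\sum_(a | a != i) h i a)%N = (k i * (n - 2) + 2)%N].
  have f0 : (axis_poly i P).[0] = 1 by rewrite axis_poly_horner0 hc ?mdeg0.
  have f'0 : (axis_poly i P)^`().[0] = 1 by rewrite -axis_poly_deriv axis_poly_horner0 dP0.
  have fn0 : axis_poly i P != 0.
    by apply: contra_eq_neq f0 => ->; rewrite horner0 eq_sym oner_neq0.
  have hG := axis_Dop_eq hdet fn0.
  have [k0 hf] := Dop_eq_exp_ell f0 f'0 hG.
  rewrite hf in hG; have := Dop_cofactor_ell_exp k0 n2 hG.
  have g0 a : (axis_poly i (mderiv a P)).[0] = 1 by rewrite axis_poly_horner0 dP0.
  case/(prod_ell_exp k0 g0) => hg hs; split => // a ai.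
  exact: hg (mem_index_enum a) ai.
exists k, h; split.
- by move=> i; case: (key i).
- move=> i t; case: (key i) => k0 hf _ _.
  by rewrite -axis_poly_horner hf horner_exp ell_horner.
- move=> i j t ji; case: (key i) => k0 _ hg _.
  by rewrite -axis_poly_horner hg // horner_exp ell_horner.
- by move=> i; case: (key i).
have hk i j : i != j -> (h i j)%:R / (k i)%:R = (mderiv i (mderiv j P))@_0 :> R.
  move=> ij; case: (key i) => k0 _ hg _.
  by rewrite -deriv_ell_exp0 // -hg 1?eq_sym // -axis_poly_deriv axis_poly_horner0.
by move=> i j ij; rewrite hk // hk 1?eq_sym // mderiv_comm.
Qed.
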